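(* Let $X$ be a nonnegative random variable with cumulative distribution function $F$, let $\gamma>0$ with $\mathbb{E}[\mathrm{e}^{\gamma X}]<\infty$, let $g\in\mathcal{G}$, and suppose there exists an optimal indemnity $\widehat{I}_g\in\mathcal{I}$ for the problem \[ \inf_{I\in\mathcal{I}} \mathbb{E}\Big[\mathrm{e}^{\gamma\,(X-I(X)+\pi(I))}\Big],\qquad \pi(I):=\mathbb{E}[g(I(X))]. \] Let $M:=\mathbb{E}[\mathrm{e}^{\gamma(X-\widehat{I}_g(X))}]$ and $d_g:=\frac{1}{\gamma}\ln(Mg'(0))$. Then the necessary condition satisfied by $\widehat{I}_g$ (namely $\widehat{I}_g(x)=0$ for $x\le d_g$, and for $x>d_g$, $\widehat{I}_g(x)\in(0,x)$ is the unique solution $y\in(0,x)$ of $\mathrm{e}^{\gamma(x-y)}=Mg'(y)$) implies that $\widehat{I}_g\in\mathcal{I}_c$, where \[ \mathcal{I}_c:=\{I\in\mathcal{I}\mid 0\le I(x')-I(x)\le x'-x \text{ for all } 0\le x\le x'\}. \] Moreover, $\widehat{I}_g$ is strictly increasing on $(d_g,\infty)$.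
   Context: $\mathcal{I}:=\{I:\mathbb{R}_+\to\mathbb{R} \text{ continuous} \mid 0\le I(x)\le x \text{ for all } x\ge 0\}$. $\mathcal{G}$ is the set of twice differentiable functions $g:\mathbb{R}_+\to\mathbb{R}_+$ with $g''\ge 0$, $g(0)=0$, $g(x)\ge x$ for all $x\ge 0$, and $g$ not identically equal to $x\mapsto x$ (so $g'\ge1$). *)

From HB Require Import structures.
From mathcomp Require Import all_boot all_order all_algebra.
From mathcomp Require Import all_classical all_reals all_analysis.
Set Implicit Arguments. Unset Strict Implicit. Unset Printing Implicit Defensive.
Import Order.TTheory GRing.Theory Num.Theory.
Import numFieldNormedType.Exports.
Local Open Scope classical_set_scope.
Local Open Scope ring_scope.

Section Defs.
Context {R : realType}.

(* The class \mathcal{I}: continuous on R_+, with 0 <= I x <= x for x >= 0.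
   Functions are represented as R -> R; only values on [0,+oo) matter. *)
Definition indemnity (I : R -> R) : Prop :=
  {within [set x : R | 0 <= x], continuous I} /\
  (forall x, 0 <= x -> 0 <= I x <= x).

Definition indemnity_c (I : R -> R) : Prop :=
  indemnity I /\
  (forall x x', 0 <= x -> x <= x' -> 0 <= I x' - I x <= x' - x).

(* The class \mathcal{G}: twice differentiable on R_+ (g is given on R; at 0
   the derivatives are taken two-sidedly, any g on R_+ admits such an
   extension), g'' >= 0, g(0) = 0, g(x) >= x on R_+ (hence g >= 0),
   and g is not the identity on R_+. *)
Definition premium_fun (g : R -> R) : Prop :=
  (forall x, 0 <= x -> derivable g x 1) /\
  (forall x, 0 <= x -> derivable (derive1 g) x 1) /\
  (forall x, 0 <= x -> 0 <= derive1 (derive1 g) x) /\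
  g 0 = 0 /\
  (forall x, 0 <= x -> x <= g x) /\
  (exists x, 0 <= x /\ g x <> x).

Context {dT : measure_display} {T : measurableType dT} (P : probability T R).

Definition premium (g : R -> R) (X : T -> R) (I : R -> R) : \bar R :=
  (\int[P]_w (g (I (X w)))%:E)%E.

Definition objective (gamma : R) (g : R -> R) (X : T -> R) (I : R -> R)
  : \bar R :=
  (\int[P]_w expeR ((gamma * (X w - I (X w)))%:E
                     + gamma%:E * premium g X I))%E.

Definition optimal_indemnity gamma g X (Ih : R -> R) : Prop :=
  indemnity Ih /\
  forall I, indemnity I -> (objective gamma g X Ih <= objective gamma g X I)%E.

Definition Mconst (gamma : R) (X : T -> R) (Ih : R -> R) : \bar R :=
  (\int[P]_w (expR (gamma * (X w - Ih (X w))))%:E)%E.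

End Defs.

Definition dg {R : realType} (gamma M : R) (g : R -> R) : R :=
  gamma^-1 * ln (M * derive1 g 0).

Definition necessary_condition {R : realType} (gamma M d : R) (g Ih : R -> R)
  : Prop :=
  (forall x, 0 <= x -> x <= d -> Ih x = 0) /\
  (forall x, 0 <= x -> d < x ->
     (0 < Ih x < x) /\
     expR (gamma * (x - Ih x)) = M * derive1 g (Ih x) /\
     (forall y, 0 < y < x -> expR (gamma * (x - y)) = M * derive1 g y -> y = Ih x)).

From HB Require Import structures.
From mathcomp Require Import all_boot all_order all_algebra.
From mathcomp Require Import all_classical all_reals all_analysis.
From mathcomp Require Import lra.

Set Implicit Arguments.
Unset Strict Implicit.
Unset Printing Implicit Defensive.
Import Order.TTheory GRing.Theory Num.Theory.
Import numFieldNormedType.Exports.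
Local Open Scope classical_set_scope.
Local Open Scope ring_scope.

(* Above the deductible the optimality condition balances a strictly increasing
   function of the retention [x - Ih x] against the nondecreasing function
   [M g'] of the indemnity [Ih x].  Raising [x] therefore cannot lower either
   side, so both the indemnity and the retention are nondecreasing in [x], and
   the indemnity strictly so.  Below the deductible the indemnity vanishes, and
   the retention stays above [d_g] because [g'] is minimal at [0]. *)

Lemma premium_fun_derive1_ndecr (R : realType) (g : R -> R) : premium_fun g ->
  {in Num.nneg &, {homo derive1 g : y y' / y <= y'}}.
Proof.
move=> [_ [dg'_ex [d2g_ge0 _]]] y y'; rewrite !nnegrE => y_ge0 _ yy'.
apply: (@ger0_derive1_ndecry R (derive1 g) 0) => //.
- by move=> x; rewrite in_itv /= andbT => /ltW; exact: dg'_ex.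
- by move=> x; rewrite in_itv /= andbT => /ltW; exact: d2g_ge0.
- apply: continuous_in_subspaceT => x; rewrite inE /= in_itv /= andbT => x_ge0.
  by apply: differentiable_continuous; apply/derivable1_diffP; exact: dg'_ex.
Qed.

Section BalanceEquation.
Variables (R : realDomainType) (D : {pred R}) (phi psi : R -> R).
Hypothesis phi_mono : {mono phi : a b / a <= b}.
Hypothesis psi_ndecr : {in D &, {homo psi : a b / a <= b}}.

Lemma balance_lt (x y x' y' : R) : y \in D -> y' \in D -> x < x' ->
  phi (x - y) = psi y -> phi (x' - y') = psi y' -> y < y'.
Proof.
move=> yD y'D lt_xx' bal bal'; rewrite ltNge; apply/negP => le_y'y.
have : phi (x' - y') <= phi (x - y) by rewrite bal bal' psi_ndecr.
by rewrite phi_mono; lra.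
Qed.

Lemma balance_subr_le (x y x' y' : R) : y \in D -> y' \in D -> x < x' ->
  phi (x - y) = psi y -> phi (x' - y') = psi y' -> x - y <= x' - y'.
Proof.
move=> yD y'D lt_xx' bal bal'.
rewrite leNgt; apply/negP; rewrite -(leW_mono phi_mono) bal bal'.
by rewrite ltNge psi_ndecr // ltW // (balance_lt yD y'D lt_xx' bal bal').
Qed.

End BalanceEquation.

Section NecessaryCondition.
Variables (R : realType) (gamma M : R) (g Ih : R -> R).
Hypotheses (gamma_gt0 : 0 < gamma) (M_ge0 : 0 <= M).
Hypothesis g'_ndecr : {in Num.nneg &, {homo derive1 g : y y' / y <= y'}}.
Hypothesis NC : necessary_condition gamma M (dg gamma M g) g Ih.

Let d := dg gamma M g.

Let phi t := expR (gamma * t).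
Let psi y := M * derive1 g y.

Let phi_mono : {mono phi : a b / a <= b}.
Proof. by move=> a b; rewrite /phi ler_expR ler_pM2l. Qed.

Let psi_ndecr : {in Num.nneg &, {homo psi : a b / a <= b}}.
Proof. by move=> a b a0 b0 ab; rewrite /psi ler_wpM2l // g'_ndecr. Qed.

Let Ih_above x : 0 <= x -> d < x ->
  [/\ Ih x \is Num.nneg, Ih x < x & phi (x - Ih x) = psi (Ih x)].
Proof.
move=> x_ge0 dx; have [/andP[Ih_gt0 Ih_lt] [bal _]] := NC.2 x x_ge0 dx.
by split; rewrite // nnegrE ltW.
Qed.

Lemma nc_ltr_indemnity x x' : 0 <= x -> d < x -> x < x' -> Ih x < Ih x'.
Proof.
move=> x_ge0 dx xx'; have [Ix0 _ bal] := Ih_above x_ge0 dx.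
have [|Ix'0 _ bal'] := Ih_above _ (lt_trans dx xx'); first lra.
exact: (balance_lt phi_mono psi_ndecr Ix0 Ix'0 xx' bal bal').
Qed.

Lemma nc_retention_le x x' : 0 <= x -> d < x -> x < x' -> x - Ih x <= x' - Ih x'.
Proof.
move=> x_ge0 dx xx'; have [Ix0 _ bal] := Ih_above x_ge0 dx.
have [|Ix'0 _ bal'] := Ih_above _ (lt_trans dx xx'); first lra.
exact: (balance_subr_le phi_mono psi_ndecr Ix0 Ix'0 xx' bal bal').
Qed.

Lemma nc_deductible_le_retention x : 0 <= x -> d < x -> d <= x - Ih x.
Proof.
move=> x_ge0 dx; have [Ix0 Ix_lt bal] := Ih_above x_ge0 dx.
have [Mg0_gt0|Mg0_le0] := ltP 0 (M * derive1 g 0); last first.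
  (* [ln] vanishes on nonpositive arguments, so then [d = 0]. *)
  by rewrite /d /dg ln0 // mulr0 subr_ge0 ltW.
rewrite -phi_mono bal /phi /d /dg mulrA mulfV ?gt_eqF // mul1r lnK ?posrE //.
have nneg0 : 0 \is @Num.nneg R by rewrite nnegrE.
by apply: (psi_ndecr nneg0 Ix0); rewrite -nnegrE.
Qed.

Lemma nc_indemnity_increments x x' : 0 <= x -> x <= x' ->
  0 <= Ih x' - Ih x <= x' - x.
Proof.
move=> x_ge0 xx'; have x'_ge0 : 0 <= x' by exact: le_trans xx'.
have [dx|xd] := ltP d x.
  have [<-|neq_xx'] := eqVneq x x'; first by rewrite !subrr lexx.
  have lt_xx' : x < x' by rewrite lt_neqAle neq_xx' xx'.
  have := nc_ltr_indemnity x_ge0 dx lt_xx'; have := nc_retention_le x_ge0 dx lt_xx'.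
  lra.
rewrite (NC.1 x x_ge0 xd) subr0.
have [dx'|x'd] := ltP d x'; last by rewrite (NC.1 x' x'_ge0 x'd) lexx subr_ge0.
have [Ix'0 _ _] := Ih_above x'_ge0 dx'; move: Ix'0; rewrite nnegrE.
have := nc_deductible_le_retention x'_ge0 dx'; lra.
Qed.

End NecessaryCondition.

Lemma Mconst_ge0 (R : realType) (dT : measure_display) (T : measurableType dT)
  (P : probability T R) (gamma : R) (X : T -> R) (Ih : R -> R) :
  0 <= fine (Mconst P gamma X Ih).
Proof.
by apply/fine_ge0/integral_ge0 => w _; rewrite lee_fin expR_ge0.
Qed.

Theorem corollary2p2 (R : realType) (dT : measure_display)
  (T : measurableType dT) (P : probability T R) (X : T -> R)
  (gamma : R) (g Ih : R -> R) :
  measurable_fun setT X ->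
  (forall w, 0 <= X w) ->
  0 < gamma ->
  (\int[P]_w (expR (gamma * X w))%:E < +oo)%E ->
  premium_fun g ->
  optimal_indemnity P gamma g X Ih ->
  necessary_condition gamma (fine (Mconst P gamma X Ih))
    (dg gamma (fine (Mconst P gamma X Ih)) g) g Ih ->
  indemnity_c Ih /\
  (forall x x', 0 <= x -> dg gamma (fine (Mconst P gamma X Ih)) g < x ->
     x < x' -> Ih x < Ih x').
Proof.
move=> _ _ gamma_gt0 _ g_prem [Ih_indem _] NC.
have g'_ndecr := premium_fun_derive1_ndecr g_prem.
have M_ge0 := Mconst_ge0 P gamma X Ih.
split; first split => //.
- exact: nc_indemnity_increments gamma_gt0 M_ge0 g'_ndecr NC.
- exact: nc_ltr_indemnity gamma_gt0 M_ge0 g'_ndecr NC.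
Qed.
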